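(* There is no non-trivial subfunctor $F$ of the identity functor on the category of groups such that $F(G)$ is uniquely divisible for every group $G$.
   Context: A group $G$ is uniquely divisible if for every $g\in G$ and every nonzero integer $n$ there is a unique $h\in G$ with $h^n=g$. A subfunctor $F$ of the identity functor assigns to each group $G$ a subgroup $F(G)\subseteq G$ with $f(F(G))\subseteq F(G')$ for every homomorphism $f:G\to G'$; it is non-trivial if $F(G)\neq 1$ for some $G$. *)

From Stdlib Require Import ZArith.

Record Group := {
  carrier :> Type;
  gop : carrier -> carrier -> carrier;
  gone : carrier;
  ginv : carrier -> carrier;
  gop_assoc : forall x y z, gop x (gop y z) = gop (gop x y) z;
  gop_1l : forall x, gop gone x = x;
  gop_1r : forall x, gop x gone = x;
  gop_Vl : forall x, gop (ginv x) x = gone;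
  gop_Vr : forall x, gop x (ginv x) = gone
}.

Arguments gop {g} _ _.
Arguments gone {g}.
Arguments ginv {g} _.

Definition is_hom {G H : Group} (f : G -> H) : Prop :=
  forall x y : G, f (gop x y) = gop (f x) (f y).

Fixpoint npow {G : Group} (x : G) (n : nat) : G :=
  match n with
  | O => gone
  | S m => gop x (npow x m)
  end.

Definition zpow {G : Group} (x : G) (n : Z) : G :=
  match n with
  | Z0 => gone
  | Zpos p => npow x (Pos.to_nat p)
  | Zneg p => ginv (npow x (Pos.to_nat p))
  end.

Record subfunctor := {
  sf : forall G : Group, G -> Prop;
  sf_one : forall G : Group, sf G gone;
  sf_op : forall (G : Group) (x y : G), sf G x -> sf G y -> sf G (gop x y);
  sf_inv : forall (G : Group) (x : G), sf G x -> sf G (ginv x);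
  sf_nat : forall (G H : Group) (f : G -> H), is_hom f ->
             forall x : G, sf G x -> sf H (f x)
}.

Definition nontrivial (F : subfunctor) : Prop :=
  exists (G : Group) (x : G), sf F G x /\ x <> gone.

(* The subgroup S (given as a predicate, assumed to be a subgroup) is
   uniquely divisible: every g in S has a unique n-th root in S, n <> 0. *)
Definition uniquely_divisible_sub (G : Group) (S : G -> Prop) : Prop :=
  forall g : G, S g -> forall n : Z, n <> 0%Z ->
    exists h : G, S h /\ zpow h n = g /\
      forall h' : G, S h' -> zpow h' n = g -> h' = h.

(* A uniquely divisible group is torsion-free: if y^k = 1 with k <> 0, then y
   and 1 are both k-th roots of 1.  The values of a subfunctor are normal, since
   conjugations are endomorphisms.  If 1 <> x lies in F(G), its image l under the
   Cayley embedding G -> Sym(G) lies in F(Sym G), hence so does the commutator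
   of l with the transposition t = (1 x).  That commutator is (x x^2)(1 x), a
   3-cycle on 1, x, x^2, which are distinct because x has infinite order; so
   F(Sym G) has torsion. *)
From Stdlib Require Import ZArith.
From Stdlib Require Import Classical ClassicalEpsilon FunctionalExtensionality ProofIrrelevance.

Section GroupFacts.
Context {G : Group}.

Lemma inv_mul (a z : G) : gop (ginv a) (gop a z) = z.
Proof. rewrite gop_assoc, gop_Vl, gop_1l. reflexivity. Qed.

Lemma mul_inv (a z : G) : gop a (gop (ginv a) z) = z.
Proof. rewrite gop_assoc, gop_Vr, gop_1l. reflexivity. Qed.

Lemma gop_fixed_l (a b : G) : gop a b = a -> b = gone.
Proof. intro E. rewrite <- (inv_mul a b), E. apply gop_Vl. Qed.

Lemma ginv_one : ginv (gone : G) = gone.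
Proof. rewrite <- (gop_1l G (ginv gone)). apply gop_Vr. Qed.

Lemma npow_one (n : nat) : npow (gone : G) n = gone.
Proof. induction n as [|n IH]; simpl; [reflexivity | rewrite IH; apply gop_1l]. Qed.

Lemma zpow_one (k : Z) : zpow (gone : G) k = gone.
Proof. destruct k; simpl; rewrite ?npow_one, ?ginv_one; reflexivity. Qed.

Definition conjg (a z : G) : G := gop a (gop z (ginv a)).

Lemma conjg_hom (a : G) : is_hom (conjg a).
Proof.
  intros x y. unfold conjg.
  rewrite <- !gop_assoc, (gop_assoc _ (ginv a) a), gop_Vl, gop_1l. reflexivity.
Qed.

End GroupFacts.

Lemma sf_conjg (F : subfunctor) (G : Group) (a x : G) :
  sf F G x -> sf F G (conjg a x).
Proof. apply sf_nat, conjg_hom. Qed.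

Lemma uniquely_divisible_torsion_free (G : Group) (S : G -> Prop) (y : G) (k : Z) :
  uniquely_divisible_sub G S -> S gone -> S y ->
  k <> 0%Z -> zpow y k = gone -> y = gone.
Proof.
  intros UD S1 Sy Hk Ey.
  destruct (UD gone S1 k Hk) as [h [_ [_ Uh]]].
  rewrite (Uh y Sy Ey). symmetry. apply Uh; [exact S1 | apply zpow_one].
Qed.

Record Perm (X : Type) := mkPerm {
  pf : X -> X;
  pg : X -> X;
  pfg : forall z, pf (pg z) = z;
  pgf : forall z, pg (pf z) = z }.
Arguments mkPerm {X}.
Arguments pf {X} _ _.
Arguments pg {X} _ _.
Arguments pfg {X} _ _.
Arguments pgf {X} _ _.

Lemma perm_ext {X : Type} (p q : Perm X) : (forall z, pf p z = pf q z) -> p = q.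
Proof.
  destruct p as [f1 g1 fg1 gf1], q as [f2 g2 fg2 gf2]; simpl; intro E.
  assert (f1 = f2) by (apply functional_extensionality; exact E). subst f2.
  assert (g1 = g2).
  { apply functional_extensionality; intro z. rewrite <- (fg2 z) at 1. apply gf1. }
  subst g2. f_equal; apply proof_irrelevance.
Qed.

Definition pcomp {X : Type} (p q : Perm X) : Perm X.
Proof.
  refine (mkPerm (fun z => pf p (pf q z)) (fun z => pg q (pg p z)) _ _); intro z.
  - rewrite pfg. apply pfg.
  - rewrite pgf. apply pgf.
Defined.

Definition pid (X : Type) : Perm X :=
  mkPerm (fun z => z) (fun z => z) (fun _ => eq_refl) (fun _ => eq_refl).

Definition pinv {X : Type} (p : Perm X) : Perm X := mkPerm (pg p) (pf p) (pgf p) (pfg p).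

Definition SymG (X : Type) : Group.
Proof.
  refine (Build_Group (Perm X) pcomp (pid X) pinv _ _ _ _ _);
    intros; apply perm_ext; intros; simpl; try reflexivity.
  - apply pgf.
  - apply pfg.
Defined.

Definition Lperm {G : Group} (a : G) : Perm G := mkPerm (gop a) (gop (ginv a)) (mul_inv a) (inv_mul a).

Lemma Lperm_hom (G : Group) : is_hom (H := SymG G) (@Lperm G).
Proof. intros x y. apply perm_ext. intro z. symmetry. apply gop_assoc. Qed.

Section Transpositions.
Context {X : Type}.

Definition swapf (a b z : X) : X :=
  if excluded_middle_informative (z = a) then b
  else if excluded_middle_informative (z = b) then a else z.

Lemma swapf_l (a b : X) : swapf a b a = b.
Proof. unfold swapf. destruct (excluded_middle_informative (a = a)); congruence. Qed.

Lemma swapf_r (a b : X) : swapf a b b = a.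
Proof.
  unfold swapf.
  destruct (excluded_middle_informative (b = a)), (excluded_middle_informative (b = b));
    congruence.
Qed.

Lemma swapf_other (a b z : X) : z <> a -> z <> b -> swapf a b z = z.
Proof.
  intros na nb. unfold swapf.
  destruct (excluded_middle_informative (z = a)), (excluded_middle_informative (z = b));
    congruence.
Qed.

Lemma swapfK (a b z : X) : swapf a b (swapf a b z) = z.
Proof.
  destruct (classic (z = a)) as [->|na]; [now rewrite swapf_l, swapf_r|].
  destruct (classic (z = b)) as [->|nb]; [now rewrite swapf_r, swapf_l|].
  now rewrite !(swapf_other a b z na nb).
Qed.

Definition swap (a b : X) : Perm X := mkPerm (swapf a b) (swapf a b) (swapfK a b) (swapfK a b).

Lemma swapf_conj (p : Perm X) (a b w : X) :
  pf p (swapf a b (pg p w)) = swapf (pf p a) (pf p b) w.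
Proof.
  destruct (classic (w = pf p a)) as [->|na]; [now rewrite pgf, !swapf_l|].
  destruct (classic (w = pf p b)) as [->|nb]; [now rewrite pgf, !swapf_r|].
  rewrite swapf_other, pfg, swapf_other; try easy;
    intro E; [apply na | apply nb]; rewrite <- E, pfg; reflexivity.
Qed.

Lemma swap_swap_l (a b c : X) : pf (@gop (SymG X) (swap b c) (swap a b)) a = c.
Proof. simpl. now rewrite swapf_l, swapf_l. Qed.

Lemma swap_swap_order3 (a b c : X) :
  a <> b -> b <> c -> a <> c -> zpow (@gop (SymG X) (swap b c) (swap a b)) 3 = gone.
Proof.
  intros ab bc ac.
  set (cyc := fun z => swapf b c (swapf a b z)).
  assert (Ca : cyc a = c) by (unfold cyc; now rewrite swapf_l, swapf_l).
  assert (Cb : cyc b = a) by (unfold cyc; rewrite swapf_r, swapf_other; congruence).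
  assert (Cc : cyc c = b) by (unfold cyc; rewrite (swapf_other a b c), swapf_r; congruence).
  apply perm_ext. intro z. change (cyc (cyc (cyc z)) = z).
  destruct (classic (z = a)) as [->|na]; [now rewrite Ca, Cc, Cb|].
  destruct (classic (z = b)) as [->|nb]; [now rewrite Cb, Ca, Cc|].
  destruct (classic (z = c)) as [->|nc]; [now rewrite Cc, Cb, Ca|].
  assert (Cz : cyc z = z) by (unfold cyc; rewrite (swapf_other a b z), (swapf_other b c z); congruence).
  now rewrite !Cz.
Qed.

End Transpositions.

Theorem corollary3p12 :
  ~ exists F : subfunctor,
      nontrivial F /\ forall G : Group, uniquely_divisible_sub G (sf F G).
Proof.
  intros [F [[G [x [Fx x1]]] UD]].
  pose proof (fun H y k => uniquely_divisible_torsion_free H (sf F H) y k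
                             (UD H) (sf_one F H)) as torsion_free.
  assert (xx1 : gop x x <> gone).
  { intro E. apply x1, (torsion_free G x 2%Z Fx); [discriminate|].
    simpl. now rewrite gop_1r. }
  assert (xxx : gop x x <> x) by (intro E; exact (x1 (gop_fixed_l x x E))).
  set (l := Lperm x : SymG G).
  set (c := gop l (conjg (swap gone x : SymG G) (ginv l))).
  assert (Fl : sf F (SymG G) l) by exact (sf_nat F _ _ _ (Lperm_hom G) x Fx).
  assert (Fc : sf F (SymG G) c) by (apply sf_op, sf_conjg, sf_inv; assumption).
  assert (Ec : c = @gop (SymG G) (swap x (gop x x)) (swap gone x)).
  { apply perm_ext. intro z. simpl.
    transitivity (swapf (gop x gone) (gop x x) (swapf gone x z)).
    - exact (swapf_conj (Lperm x) gone x _).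
    - now rewrite gop_1r. }
  assert (c1 : c = gone).
  { apply (torsion_free _ c 3%Z Fc); [discriminate|].
    rewrite Ec. apply swap_swap_order3; congruence. }
  apply xx1. rewrite <- (swap_swap_l gone x (gop x x)), <- Ec, c1. reflexivity.
Qed.
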